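(* Let $\mathcal H_\mathrm{S},\mathcal H_\mathrm{M},\mathcal H_\mathrm{R}$ be finite-dimensional Hilbert spaces, $\rho^\mathrm{i}_\mathrm{SM}$ any density operator on $\mathcal H_\mathrm{S}\otimes\mathcal H_\mathrm{M}$, $\mathcal H_\mathrm{R}$ a Hermitian reservoir Hamiltonian, $\beta>0$, $\rho^\mathrm{i}_\mathrm{R}=e^{-\beta\mathcal H_\mathrm{R}}/\mathrm{Tr}\,e^{-\beta\mathcal H_\mathrm{R}}$, $U_\mathrm{SR}$ a unitary on $\mathcal H_\mathrm{S}\otimes\mathcal H_\mathrm{R}$ and $\rho^\mathrm{f}_\mathrm{SMR}=(U_\mathrm{SR}\otimes 1_\mathrm{M})(\rho^\mathrm{i}_\mathrm{SM}\otimes\rho^\mathrm{i}_\mathrm{R})(U_\mathrm{SR}\otimes 1_\mathrm{M})^\dagger$. With $Q_\mathrm{R}=\mathrm{Tr}[(\rho^\mathrm{f}_\mathrm{R}-\rho^\mathrm{i}_\mathrm{R})\mathcal H_\mathrm{R}]$, $\Sigma_\mathrm{S}=\mathcal S(\rho^\mathrm{f}_\mathrm{S})-\mathcal S(\rho^\mathrm{i}_\mathrm{S})+\beta Q_\mathrm{R}$, $\Sigma_\mathrm{S|M}=\mathcal S_\mathrm{S|M}(\mathrm f)-\mathcal S_\mathrm{S|M}(\mathrm i)+\beta Q_\mathrm{R}$ and $\Sigma_\mathrm{I}=\Sigma_\mathrm{S|M}-\Sigma_\mathrm{S}$, one has $$\Sigma_\mathrm{I}=\mathcal I_\mathrm{M:R|S}(\mathrm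 f):=\mathcal S(\rho^\mathrm{f}_\mathrm{SR})+\mathcal S(\rho^\mathrm{f}_\mathrm{SM})-\mathcal S(\rho^\mathrm{f}_\mathrm{S})-\mathcal S(\rho^\mathrm{f}_\mathrm{SMR}).$$
   Context: $\mathcal S(\rho)=-\mathrm{Tr}\,\rho\ln\rho$ is the von Neumann entropy; $\mathcal S_\mathrm{S|M}=\mathcal S(\rho_\mathrm{SM})-\mathcal S(\rho_\mathrm{M})$ evaluated on the reduced states at the indicated time; reduced states are partial traces of the global state. *)

From HB Require Import structures.
From mathcomp Require Import all_boot all_order all_algebra.
From mathcomp Require Import sesquilinear spectral.
From mathcomp.real_closed Require Import complex mxtens.
From mathcomp Require Import reals.
From mathcomp.analysis Require Import sequences exp.

Set Implicit Arguments.
Unset Strict Implicit.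
Unset Printing Implicit Defensive.

Import Order.TTheory GRing.Theory Num.Theory Num.Def.
Local Open Scope ring_scope.
Local Open Scope complex_scope.

Section QInfo.
Variable R : realType.
Local Notation C := (R[i]).

Definition adj {m n} (A : 'M[C]_(m, n)) : 'M[C]_(n, m) := (map_mx conjC A)^T.

Definition psd {n} (A : 'M[C]_n) : Prop :=
  forall v : 'rV[C]_n, 0 <= (v *m A *m adj v) 0 0.

Definition density {n} (A : 'M[C]_n) : Prop :=
  A \is hermsymmx /\ psd A /\ \tr A = 1.

Definition mxfun {n} (f : C -> C) (A : 'M[C]_n) : 'M[C]_n :=
  invmx (spectralmx A) *m diag_mx (map_mx f (spectral_diag A)) *m spectralmx A.

(* von Neumann entropy  S(rho) = - Tr rho ln rho  = - sum_k l_k ln l_k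
   over the eigenvalues l_k of rho (with the convention 0 ln 0 = 0) *)
Definition vN_entropy {n} (rho : 'M[C]_n) : R :=
  - \sum_(k < n) (let l := complex.Re (spectral_diag rho 0 k) in
                       if l == 0 then 0 else l * ln l).

Definition gibbs {n} (beta : R) (H : 'M[C]_n) : 'M[C]_n :=
  let E := mxfun (fun z => (expR (- beta * complex.Re z))%:C) H in (\tr E)^-1 *: E.

(* partial traces on H_1 (x) H_2 ~ 'M_(m * n) (index (i,j) |-> i * n + j,
   the convention of tensmx) *)
Definition ptrace2 {m n} (A : 'M[C]_(m * n)) : 'M[C]_m :=
  \matrix_(i, j) \sum_(k < n) A (mxtens_index (i, k)) (mxtens_index (j, k)).
Definition ptrace1 {m n} (A : 'M[C]_(m * n)) : 'M[C]_n :=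
  \matrix_(i, j) \sum_(k < m) A (mxtens_index (k, i)) (mxtens_index (k, j)).

Definition idx_SRM_of_SMR {s m r} (p : 'I_(s * m * r)) : 'I_(s * r * m) :=
  let: (sm, c) := mxtens_unindex p in
  let: (a, b) := mxtens_unindex sm in
  mxtens_index (mxtens_index (a, c), b).
Definition idx_SMR_of_SRM {s m r} (p : 'I_(s * r * m)) : 'I_(s * m * r) :=
  let: (sr, b) := mxtens_unindex p in
  let: (a, c) := mxtens_unindex sr in
  mxtens_index (mxtens_index (a, b), c).

Definition to_SRM {s m r} (A : 'M[C]_(s * m * r)) : 'M[C]_(s * r * m) :=
  \matrix_(p, q) A (idx_SMR_of_SRM p) (idx_SMR_of_SRM q).
Definition to_SMR {s m r} (A : 'M[C]_(s * r * m)) : 'M[C]_(s * m * r) :=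
  \matrix_(p, q) A (idx_SRM_of_SMR p) (idx_SRM_of_SMR q).

Definition UxId {s m r} (U : 'M[C]_(s * r)) : 'M[C]_(s * m * r) :=
  to_SMR (U *t (1%:M : 'M[C]_m)).

Definition cond_entropy {s m} (rhoSM : 'M[C]_(s * m)) : R :=
  vN_entropy rhoSM - vN_entropy (ptrace1 rhoSM).

End QInfo.

(* Since [U_SR ⊗ 1_M] does not act on M and a partial trace over S ⊗ R is
   invariant under conjugation by a unitary on S ⊗ R, the reduced state of M
   is unchanged.  The von Neumann entropy depends only on the spectrum, so it
   is invariant under unitary conjugation, and it is additive on product
   states: writing density matrices as [P^* diag(d) P] with [d] a probability
   vector, the spectrum of [ρ ⊗ σ] is [d ⊗ e] and [x ln x] turns products into
   sums.  Hence [S(ρ^f_SMR) = S(ρ_SM) + S(ρ_R)] and, since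
   [ρ^f_SR = U (ρ_S ⊗ ρ_R) U^*], [S(ρ^f_SR) = S(ρ_S) + S(ρ_R)].  Substituting
   these into [Σ_I = Σ_S|M - Σ_S], the heat terms cancel and the identity
   becomes a ring identity between entropies. *)

From HB Require Import structures.
From mathcomp Require Import all_boot all_order all_algebra.
From mathcomp Require Import sesquilinear spectral.
From mathcomp.real_closed Require Import complex mxtens.
From mathcomp Require Import reals.
From mathcomp.analysis Require Import sequences exp.
From mathcomp Require Import ring.
Import Order.TTheory GRing.Theory Num.Theory Num.Def.

Set Implicit Arguments.
Unset Strict Implicit.
Unset Printing Implicit Defensive.

Local Open Scope ring_scope.
Local Open Scope complex_scope.
Local Open Scope sesquilinear_scope.

Arguments mxtens_index {m n}.
Arguments mxtens_unindex {m n}.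

Lemma sum_mxtens_index (V : nmodType) m n (F : 'I_(m * n) -> V) :
  \sum_(p < m * n) F p = \sum_(i < m) \sum_(j < n) F (mxtens_index (i, j)).
Proof.
rewrite pair_big /= (reindex mxtens_index) /=; first by apply: eq_bigr => -[].
by exists mxtens_unindex => p _; rewrite (mxtens_indexK, mxtens_unindexK).
Qed.

Lemma mxtens_index_eq m n (a a' : 'I_m) (b b' : 'I_n) :
  (mxtens_index (a, b) == mxtens_index (a', b')) = (a == a') && (b == b').
Proof. by rewrite (can_eq (@mxtens_indexK m n)) xpair_eqE. Qed.

Lemma sum_delta_l (K : pzSemiRingType) (I : finType) (i0 : I) (F : I -> K) :
  \sum_i (i == i0)%:R * F i = F i0.
Proof.
by rewrite (bigD1 i0) //= eqxx mul1r big1 ?addr0 // => i /negPf ->; rewrite mul0r.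
Qed.

Lemma sum_delta_r (K : pzSemiRingType) (I : finType) (i0 : I) (F : I -> K) :
  \sum_i F i * (i == i0)%:R = F i0.
Proof.
rewrite -[RHS](sum_delta_l i0).
by apply: eq_bigr => i _; rewrite mulr_natl mulr_natr.
Qed.

Section TensorProduct.
Variable K : comPzRingType.

Lemma tensmx11 m n : (1%:M : 'M[K]_m) *t (1%:M : 'M[K]_n) = 1%:M.
Proof.
apply/matrixP => p q.
case: (mxtens_indexP p) => a b; case: (mxtens_indexP q) => a' b'.
by rewrite tensmxE !mxE mxtens_index_eq -natrM mulnb.
Qed.

Lemma tens_rowE m n (d : 'rV[K]_m) (e : 'rV[K]_n) a b :
  (d *t e : 'rV_(m * n)) 0 (mxtens_index (a, b)) = d 0 a * e 0 b.
Proof. by rewrite !mxE mxtens_indexK /= !ord1. Qed.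

Lemma diag_mx_tens m n (d : 'rV[K]_m) (e : 'rV[K]_n) :
  diag_mx (d *t e : 'rV_(m * n)) = diag_mx d *t diag_mx e.
Proof.
apply/matrixP => p q.
case: (mxtens_indexP p) => a b; case: (mxtens_indexP q) => a' b'.
rewrite tensmxE [LHS]mxE tens_rowE !mxE mxtens_index_eq.
by case: (a == a'); case: (b == b'); rewrite ?mulr0n ?mulr1n ?mulr0 ?mul0r.
Qed.

Lemma map_tens_row (K' : comPzRingType) (f : {rmorphism K -> K'}) m n
    (d : 'rV[K]_m) (e : 'rV[K]_n) :
  map_mx f (d *t e : 'rV_(m * n)) = (map_mx f d *t map_mx f e : 'rV_(m * n)).
Proof. by apply/matrixP => i j; rewrite !mxE rmorphM. Qed.

Lemma tensmx1E m n (A : 'M[K]_m) i k a b :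
  (A *t (1%:M : 'M[K]_n)) (mxtens_index (i, k)) (mxtens_index (a, b)) =
  A i a * (k == b)%:R.
Proof. by rewrite tensmxE mxE. Qed.

Lemma mul_tensmx1_mxE m n p (A : 'M[K]_m) (X : 'M[K]_(m * n, p)) i k q :
  ((A *t 1%:M) *m X) (mxtens_index (i, k)) q =
  \sum_a A i a * X (mxtens_index (a, k)) q.
Proof.
rewrite mxE sum_mxtens_index; apply: eq_bigr => a _.
under eq_bigr do rewrite tensmx1E eq_sym mulrAC.
exact: sum_delta_r.
Qed.

Lemma mul_mx_tensmx1E m n p (B : 'M[K]_m) (Y : 'M[K]_(p, m * n)) q j k :
  (Y *m (B *t 1%:M)) q (mxtens_index (j, k)) =
  \sum_c Y q (mxtens_index (c, k)) * B c j.
Proof.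
rewrite mxE sum_mxtens_index; apply: eq_bigr => c _.
under eq_bigr do rewrite tensmx1E mulrA.
exact: sum_delta_r.
Qed.

End TensorProduct.

Section ConjugateTranspose.
Variable C : numClosedFieldType.

Lemma trmxC_mul m n p (A : 'M[C]_(m, n)) (B : 'M[C]_(n, p)) :
  (A *m B)^t* = B^t* *m A^t*.
Proof. by rewrite trmx_mul map_mxM. Qed.

Lemma trmxC1 n : (1%:M : 'M[C]_n)^t* = 1%:M.
Proof. by rewrite trmx1 map_mx1. Qed.

Lemma trmxC_tens m n p q (A : 'M[C]_(m, n)) (B : 'M[C]_(p, q)) :
  (A *t B)^t* = A^t* *t B^t*.
Proof. by rewrite trmx_tens map_mxT. Qed.

Lemma tens_unitarymx m n (P : 'M[C]_m) (Q : 'M[C]_n) :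
  P \is unitarymx -> Q \is unitarymx -> P *t Q \is unitarymx.
Proof.
move=> /unitarymxP PP /unitarymxP QQ; apply/unitarymxP.
by rewrite trmxC_tens tensmx_mul PP QQ tensmx11.
Qed.

Lemma trmxC_unitary_mulmx n (P : 'M[C]_n) : P \is unitarymx -> P^t* *m P = 1%:M.
Proof. by move=> P_unitary; rewrite -[P^t*]mul1mx mulmxKtV. Qed.

Lemma mxtrace_unitary_conj n (P A : 'M[C]_n) :
  P \is unitarymx -> \tr (P^t* *m A *m P) = \tr A.
Proof. by move=> /unitarymxP PP; rewrite mxtrace_mulC mulmxA PP mul1mx. Qed.

Lemma char_poly_similar n (P A : 'M[C]_n) :
  P \in unitmx -> char_poly (invmx P *m A *m P) = char_poly A.
Proof.
move=> P_unit; rewrite /char_poly /char_poly_mx.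
have -> : 'X%:M - map_mx polyC (invmx P *m A *m P) =
  map_mx polyC (invmx P) *m ('X%:M - map_mx polyC A) *m map_mx polyC P.
  rewrite mulmxBr mulmxBl !map_mxM; congr (_ - _).
  by rewrite mul_mx_scalar -scalemxAl -map_mxM mulVmx // map_mx1 scalemx1.
by rewrite !det_mulmx mulrC mulrA -det_mulmx -map_mxM mulmxV // map_mx1 det1 mul1r.
Qed.

End ConjugateTranspose.

Section PartialTrace.
Variable R : realType.
Local Notation C := R[i].

Lemma ptrace2_tens m n (A : 'M[C]_m) (B : 'M[C]_n) : ptrace2 (A *t B) = \tr B *: A.
Proof.
apply/matrixP => i j; rewrite !mxE mulr_suml.
by apply: eq_bigr => k _; rewrite tensmxE mulrC.
Qed.

Lemma mxtrace_ptrace2 m n (X : 'M[C]_(m * n)) : \tr (ptrace2 X) = \tr X.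
Proof. by rewrite [RHS]sum_mxtens_index; apply: eq_bigr => i _; rewrite mxE. Qed.

Lemma ptrace2_trmxC m n (X : 'M[C]_(m * n)) : ptrace2 (X^t*) = (ptrace2 X)^t*.
Proof.
apply/matrixP => i j; rewrite !mxE rmorph_sum.
by apply: eq_bigr => k _; rewrite !mxE.
Qed.

Lemma ptrace2_conj_tensmx1 m n (A B : 'M[C]_m) (X : 'M[C]_(m * n)) :
  ptrace2 ((A *t 1%:M) *m X *m (B *t 1%:M)) = A *m ptrace2 X *m B.
Proof.
apply/matrixP => i j; rewrite !mxE.
under eq_bigr do rewrite mul_mx_tensmx1E.
under eq_bigr do under eq_bigr do rewrite mul_tensmx1_mxE mulr_suml.
rewrite exchange_big /=; apply: eq_bigr => c _.
rewrite !mxE mulr_suml; under [RHS]eq_bigr do rewrite !mxE mulr_sumr mulr_suml.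
by rewrite exchange_big.
Qed.

Lemma ptrace1_tensmx1_mulC m n (A : 'M[C]_m) (X : 'M[C]_(m * n)) :
  ptrace1 ((A *t 1%:M) *m X) = ptrace1 (X *m (A *t 1%:M)).
Proof.
apply/matrixP => i j; rewrite !mxE.
under eq_bigr do rewrite mul_tensmx1_mxE.
under [RHS]eq_bigr do rewrite mul_mx_tensmx1E.
rewrite exchange_big; apply: eq_bigr => a _.
by apply: eq_bigr => k _; rewrite mulrC.
Qed.

Lemma ptrace1_conj_tensmx1 m n (A B : 'M[C]_m) (X : 'M[C]_(m * n)) :
  B *m A = 1%:M -> ptrace1 ((A *t 1%:M) *m X *m (B *t 1%:M)) = ptrace1 X.
Proof.
move=> BA; rewrite -mulmxA ptrace1_tensmx1_mulC -mulmxA tensmx_mul BA.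
by rewrite mul1mx tensmx11 mulmx1.
Qed.

End PartialTrace.

Section Reordering.
Variables (R : realType) (s m r : nat).
Local Notation C := R[i].

Lemma idx_SRM_of_SMRE a b c :
  @idx_SRM_of_SMR s m r (mxtens_index (mxtens_index (a, b), c)) =
  mxtens_index (mxtens_index (a, c), b).
Proof. by rewrite /idx_SRM_of_SMR !mxtens_indexK. Qed.

Lemma idx_SMR_of_SRME a b c :
  @idx_SMR_of_SRM s m r (mxtens_index (mxtens_index (a, c), b)) =
  mxtens_index (mxtens_index (a, b), c).
Proof. by rewrite /idx_SMR_of_SRM !mxtens_indexK. Qed.

Lemma idx_SRM_of_SMRK : cancel (@idx_SRM_of_SMR s m r) (@idx_SMR_of_SRM s m r).
Proof.
move=> p; case: (mxtens_indexP p) => sm c; case: (mxtens_indexP sm) => a b.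
by rewrite idx_SRM_of_SMRE idx_SMR_of_SRME.
Qed.

Lemma idx_SMR_of_SRMK : cancel (@idx_SMR_of_SRM s m r) (@idx_SRM_of_SMR s m r).
Proof.
move=> p; case: (mxtens_indexP p) => sr b; case: (mxtens_indexP sr) => a c.
by rewrite idx_SMR_of_SRME idx_SRM_of_SMRE.
Qed.

Lemma to_SRM_mul (A B : 'M[C]_(s * m * r)) :
  to_SRM (A *m B) = to_SRM A *m to_SRM B.
Proof.
apply/matrixP => p q; rewrite !mxE (reindex (@idx_SMR_of_SRM s m r)) /=.
  by apply: eq_bigr => l _; rewrite !mxE.
apply: onW_bij; exists (@idx_SRM_of_SMR s m r).
  exact: idx_SMR_of_SRMK.
exact: idx_SRM_of_SMRK.
Qed.

Lemma to_SRM1 : to_SRM (1%:M : 'M[C]_(s * m * r)) = 1%:M.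
Proof. by apply/matrixP => p q; rewrite !mxE (can_eq idx_SMR_of_SRMK). Qed.

Lemma to_SRM_trmxC (A : 'M[C]_(s * m * r)) : to_SRM (A^t*) = (to_SRM A)^t*.
Proof. by apply/matrixP => p q; rewrite !mxE. Qed.

Lemma to_SRMK (A : 'M[C]_(s * m * r)) : to_SMR (to_SRM A) = A.
Proof. by apply/matrixP => p q; rewrite !mxE !idx_SRM_of_SMRK. Qed.

Lemma to_SMRK (A : 'M[C]_(s * r * m)) : to_SRM (to_SMR A) = A.
Proof. by apply/matrixP => p q; rewrite !mxE !idx_SMR_of_SRMK. Qed.

Lemma to_SRM_UxId (U : 'M[C]_(s * r)) : to_SRM (@UxId R s m r U) = U *t 1%:M.
Proof. exact: to_SMRK. Qed.

Lemma UxId_unitary (U : 'M[C]_(s * r)) :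
  U \is unitarymx -> @UxId R s m r U \is unitarymx.
Proof.
move=> /unitarymxP UU; apply/unitarymxP; apply: (can_inj to_SRMK).
rewrite to_SRM_mul to_SRM_trmxC to_SRM_UxId to_SRM1 trmxC_tens tensmx_mul UU.
by rewrite trmxC1 mul1mx tensmx11.
Qed.

Lemma ptrace2_to_SRM_tens (A : 'M[C]_(s * m)) (B : 'M[C]_r) :
  ptrace2 (to_SRM (A *t B)) = ptrace2 A *t B.
Proof.
apply/matrixP => p q.
case: (mxtens_indexP p) => a c; case: (mxtens_indexP q) => a' c'.
rewrite !mxE !mxtens_indexK /= mulr_suml; apply: eq_bigr => b _.
by rewrite !mxE !idx_SMR_of_SRME !mxtens_indexK.
Qed.

Lemma ptrace1_ptrace2 (X : 'M[C]_(s * m * r)) :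
  ptrace1 (ptrace2 X) = ptrace1 (to_SRM X).
Proof.
apply/matrixP => b b'; rewrite !mxE sum_mxtens_index; apply: eq_bigr => a _.
by rewrite !mxE; apply: eq_bigr => c _; rewrite !mxE !idx_SMR_of_SRME.
Qed.

End Reordering.

Section Density.
Variable R : realType.
Local Notation C := R[i].

Lemma adjE m n (A : 'M[C]_(m, n)) : adj A = A^t*.
Proof. by rewrite /adj map_trmx. Qed.

Lemma hermsymmxP n (A : 'M[C]_n) : reflect (A = A^t*) (A \is hermsymmx).
Proof. by apply: (iffP (is_hermitianmxP _ _ _)); rewrite expr0 scale1r. Qed.

Lemma density_normalmx n (A : 'M[C]_n) : density A -> A \is normalmx.
Proof. by case=> /hermitian_normalmx. Qed.

Lemma psd_mulmx m n (B : 'M[C]_(m, n)) (A : 'M[C]_n) :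
  psd A -> psd (B *m A *m B^t*).
Proof.
by move=> A_psd v; have := A_psd (v *m B); rewrite !adjE trmxC_mul !mulmxA.
Qed.

Lemma psd_sum n (I : finType) (F : I -> 'M[C]_n) :
  (forall i, psd (F i)) -> psd (\sum_i F i).
Proof.
move=> F_psd v; rewrite mulmx_sumr mulmx_suml summxE.
by apply: sumr_ge0 => i _; exact: F_psd.
Qed.

Lemma psd_ge0_diag n (A : 'M[C]_n) k : psd A -> 0 <= A k k.
Proof.
move=> /(_ (delta_mx 0 k)).
by rewrite adjE trmx_delta map_delta_mx -rowE -colE !mxE.
Qed.

Lemma psd_diag_mx n (d : 'rV[C]_n) : (forall k, 0 <= d 0 k) -> psd (diag_mx d).
Proof.
move=> d_ge0 v; rewrite adjE mul_mx_diag mxE; apply: sumr_ge0 => k _.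
by rewrite !mxE mulrAC -normCK mulr_ge0 ?exprn_ge0.
Qed.

(* [slicemx m k] is the operator [1 ⊗ <k|]; it cannot be written with [*t]
   because ['M_(m * 1, _)] is not convertible to ['M_(m, _)]. *)
Definition slicemx m n (k : 'I_n) : 'M[C]_(m, m * n) :=
  \matrix_(i, p) (p == mxtens_index (i, k))%:R.

Lemma ptrace2_slicemx m n (X : 'M[C]_(m * n)) :
  ptrace2 X = \sum_k slicemx m k *m X *m (slicemx m k)^t*.
Proof.
apply/matrixP => i j; rewrite !mxE summxE; apply: eq_bigr => k _; rewrite mxE.
under eq_bigr => q _.
  rewrite mxE (eq_bigr (fun p => (p == mxtens_index (i, k))%:R * X p q));
    last first.
    by move=> p _; rewrite mxE.
  rewrite sum_delta_l !mxE rmorph_nat; over.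
by rewrite sum_delta_r.
Qed.

Lemma ptrace2_psd m n (X : 'M[C]_(m * n)) : psd X -> psd (ptrace2 X).
Proof.
by move=> X_psd; rewrite ptrace2_slicemx; apply: psd_sum => k; exact: psd_mulmx.
Qed.

Lemma ptrace2_density m n (X : 'M[C]_(m * n)) : density X -> density (ptrace2 X).
Proof.
case=> /hermsymmxP X_herm [X_psd X_tr]; split; [|split].
- by apply/hermsymmxP; rewrite -ptrace2_trmxC -X_herm.
- exact: ptrace2_psd.
- by rewrite mxtrace_ptrace2.
Qed.

Definition prob_vector n (d : 'rV[R]_n) : Prop :=
  (forall k, 0 <= d 0 k) /\ \sum_k d 0 k = 1.

Definition prob_eigendec n (A P : 'M[C]_n) (d : 'rV[R]_n) : Prop :=
  [/\ P \is unitarymx, A = P^t* *m diag_mx (map_mx (real_complex R) d) *m P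
    & prob_vector d].

Lemma prob_eigendec_density n (A P : 'M[C]_n) d :
  prob_eigendec A P d -> density A.
Proof.
case=> P_unitary -> [d_ge0 d_sum1]; split; [|split].
- have D_herm : (diag_mx (map_mx (real_complex R) d))^t* =
                  diag_mx (map_mx (real_complex R) d).
    rewrite tr_diag_mx map_diag_mx; congr diag_mx; apply/matrixP => i k.
    by rewrite !mxE; exact: conjc_real.
  by apply/hermsymmxP; rewrite !trmxC_mul trmxCK D_herm !mulmxA.
- by rewrite -{2}(trmxCK P); apply/psd_mulmx/psd_diag_mx => k; rewrite mxE ler0c.
- rewrite mxtrace_unitary_conj // mxtrace_diag -(rmorph1 (real_complex R)) -d_sum1.
  by rewrite rmorph_sum; apply: eq_bigr => k _; rewrite mxE.
Qed.

Lemma density_prob_eigendec n (A : 'M[C]_n) :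
  density A -> exists P d, prob_eigendec A P d.
Proof.
case=> /hermitian_normalmx /orthomx_spectralP AE [A_psd A_tr].
have P_unitary := spectral_unitarymx A; rewrite invmx_unitary // in AE.
move: (spectralmx A) (spectral_diag A) P_unitary AE => P e P_unitary AE.
have e_ge0 k : 0 <= e 0 k.
  have := psd_ge0_diag k (psd_mulmx P A_psd).
  by rewrite AE !mulmxA mulmxtVK // (unitarymxP P_unitary) mul1mx mxE eqxx mulr1n.
have eE k : e 0 k = (complex.Re (e 0 k))%:C.
  move: (e_ge0 k); rewrite lecE /= => /andP[/eqP Im_e _].
  by case: (e 0 k) Im_e => a b /= ->.
exists P, (map_mx (@complex.Re R) e); split; [exact: P_unitary | | split].
- suff -> : map_mx (real_complex R) (map_mx (@complex.Re R) e) = e by [].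
  by apply/matrixP => i k; rewrite !mxE ord1 -eE.
- by move=> k; rewrite mxE -ler0c -eE.
- apply: (@complexI R).
  rewrite rmorph_sum rmorph1 -A_tr AE mxtrace_unitary_conj //.
  by rewrite mxtrace_diag; apply: eq_bigr => k _; rewrite mxE [RHS]eE.
Qed.

Lemma prob_vector_tens m n (d : 'rV[R]_m) (e : 'rV[R]_n) :
  prob_vector d -> prob_vector e -> prob_vector (d *t e : 'rV_(m * n)).
Proof.
case=> d_ge0 d_sum1 [e_ge0 e_sum1]; split.
  by move=> p; case: (mxtens_indexP p) => a b; rewrite tens_rowE mulr_ge0.
rewrite sum_mxtens_index -[RHS]d_sum1; apply: eq_bigr => a _.
by under eq_bigr do rewrite tens_rowE; rewrite -mulr_sumr e_sum1 mulr1.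
Qed.

Lemma prob_eigendec_tens m n (A P : 'M[C]_m) d (B Q : 'M[C]_n) e :
  prob_eigendec A P d -> prob_eigendec B Q e ->
  prob_eigendec (A *t B) (P *t Q) (d *t e).
Proof.
case=> P_unitary AE d_prob [Q_unitary BE e_prob]; split.
- exact: tens_unitarymx.
- by rewrite map_tens_row diag_mx_tens trmxC_tens !tensmx_mul -AE -BE.
- exact: prob_vector_tens.
Qed.

Lemma density_tens m n (A : 'M[C]_m) (B : 'M[C]_n) :
  density A -> density B -> density (A *t B).
Proof.
move=> /density_prob_eigendec[P [d Adec]] /density_prob_eigendec[Q [e Bdec]].
exact: prob_eigendec_density (prob_eigendec_tens Adec Bdec).
Qed.

Lemma gibbs_density n beta (H : 'M[C]_n) : (0 < n)%N -> density (gibbs beta H).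
Proof.
move=> n_gt0; rewrite /gibbs /mxfun.
have Q_unitary := spectral_unitarymx H; rewrite invmx_unitary //.
move: (spectralmx H) (spectral_diag H) Q_unitary => Q e Q_unitary.
pose g : 'rV[R]_n := \row_k expR (- beta * complex.Re (e 0 k)).
have -> : map_mx (fun z => (expR (- beta * complex.Re z))%:C) e =
          map_mx (real_complex R) g.
  by apply/matrixP => i k; rewrite !mxE ord1.
have g_gt0 k : 0 < g 0 k by rewrite mxE expR_gt0.
have sum_g_gt0 : 0 < \sum_k g 0 k.
  rewrite (bigD1 (Ordinal n_gt0)) //= ltr_wpDr ?g_gt0 //.
  by apply: sumr_ge0 => k _; exact: ltW.
apply: (prob_eigendec_density (P := Q) (d := (\sum_k g 0 k)^-1 *: g)).
split => //.
- rewrite mxtrace_unitary_conj // mxtrace_diag map_mxZ linearZ /=.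
  rewrite -scalemxAr -scalemxAl fmorphV rmorph_sum; congr (_^-1 *: _).
  by apply: eq_bigr => k _; rewrite mxE.
- split => [k|]; first by rewrite mxE mulr_ge0 ?invr_ge0 ?ltW.
  by under eq_bigr do rewrite mxE; rewrite -mulr_sumr mulVf ?gt_eqF.
Qed.

End Density.

Section Entropy.
Variable R : realType.
Local Notation C := R[i].

Definition xlnx (x : R) : R := if x == 0 then 0 else x * ln x.

Definition shannon_entropy n (d : 'rV[R]_n) : R := - \sum_k xlnx (d 0 k).

Lemma xlnxM x y : 0 <= x -> 0 <= y -> xlnx (x * y) = y * xlnx x + x * xlnx y.
Proof.
rewrite /xlnx le0r => /predU1P[-> _|x_gt0].
  by rewrite mul0r eqxx !mulr0 mul0r add0r.
rewrite le0r => /predU1P[->|y_gt0].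
  by rewrite mulr0 eqxx !mul0r mulr0 addr0.
rewrite mulf_eq0 !gt_eqF // lnM ?posrE //; ring.
Qed.

Lemma shannon_entropy_tens m n (d : 'rV[R]_m) (e : 'rV[R]_n) :
  prob_vector d -> prob_vector e ->
  shannon_entropy (d *t e : 'rV_(m * n)) = shannon_entropy d + shannon_entropy e.
Proof.
case=> d_ge0 d_sum1 [e_ge0 e_sum1].
rewrite /shannon_entropy sum_mxtens_index -opprD; congr (- _).
under eq_bigr do under eq_bigr do rewrite tens_rowE xlnxM //.
under eq_bigr do rewrite big_split /= -mulr_suml -mulr_sumr e_sum1 mul1r.
by rewrite big_split /= -mulr_suml d_sum1 mul1r.
Qed.

Lemma vN_entropy_unitary_diag n (A P : 'M[C]_n) (d : 'rV[C]_n) :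
  P \is unitarymx -> A = P^t* *m diag_mx d *m P ->
  vN_entropy A = - \sum_k xlnx (complex.Re (d 0 k)).
Proof.
move=> P_unitary AE.
have /orthomx_spectralP AE' : A \is normalmx.
  apply/orthomx_spectral_subproof; exists (P, d) => /=; first exact: P_unitary.
  by rewrite (invmx_unitary P_unitary).
(* Both [d] and [spectral_diag A] list the roots of [char_poly A]. *)
have char_diag : char_poly (diag_mx d) = char_poly (diag_mx (spectral_diag A)).
  rewrite -(char_poly_similar (diag_mx d) (unitarymx_unit P_unitary)).
  rewrite (invmx_unitary P_unitary) -AE [in LHS]AE'.
  by rewrite char_poly_similar ?spectral_unit.
have char_diagE (v : 'rV[C]_n) :
    char_poly (diag_mx v) =
    \prod_(x <- [seq v 0 i | i <- index_enum 'I_n]) ('X - x%:P).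
  rewrite (char_poly_trig (diag_mx_is_trig v)) big_map.
  by apply: eq_bigr => i _; rewrite mxE eqxx mulr1n.
rewrite !char_diagE in char_diag.
have := perm_big _ (op := +%R) (x := 0) (F := xlnx \o @complex.Re R) (P := xpredT)
  (prod_XsubC_eq char_diag).
by rewrite !big_map => sum_eq; rewrite /vN_entropy sum_eq.
Qed.

Lemma vN_entropy_prob_eigendec n (A P : 'M[C]_n) d :
  prob_eigendec A P d -> vN_entropy A = shannon_entropy d.
Proof.
case=> P_unitary AE _; rewrite (vN_entropy_unitary_diag P_unitary AE).
by congr (- _); apply: eq_bigr => k _; rewrite mxE.
Qed.

Lemma vN_entropy_unitary_conj n (A W : 'M[C]_n) :
  A \is normalmx -> W \is unitarymx -> vN_entropy (W *m A *m W^t*) = vN_entropy A.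
Proof.
move=> /orthomx_spectralP AE W_unitary; have P_unitary := spectral_unitarymx A.
rewrite invmx_unitary // in AE.
rewrite [RHS](vN_entropy_unitary_diag P_unitary AE).
apply: (@vN_entropy_unitary_diag _ _ (spectralmx A *m W^t*)).
  by apply: (mul_unitarymx P_unitary); rewrite trmxC_unitary; exact: W_unitary.
by rewrite trmxC_mul trmxCK {1}AE !mulmxA.
Qed.

Lemma vN_entropy_tens m n (A : 'M[C]_m) (B : 'M[C]_n) :
  density A -> density B -> vN_entropy (A *t B) = vN_entropy A + vN_entropy B.
Proof.
move=> /density_prob_eigendec[P [d Adec]] /density_prob_eigendec[Q [e Bdec]].
rewrite (vN_entropy_prob_eigendec (prob_eigendec_tens Adec Bdec)).
have [[_ _ d_prob] [_ _ e_prob]] := (Adec, Bdec).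
rewrite shannon_entropy_tens //.
by rewrite (vN_entropy_prob_eigendec Adec) (vN_entropy_prob_eigendec Bdec).
Qed.

End Entropy.

Theorem theorem3 (R : realType) (s m r : nat)
  (rhoSM : 'M[R[i]]_(s * m)) (HR : 'M[R[i]]_r) (beta : R)
  (U : 'M[R[i]]_(s * r)) :
  density rhoSM ->
  HR \is hermsymmx ->
  (0 < r)%N ->
  0 < beta ->
  U \is unitarymx ->
  let rhoR_i : 'M[R[i]]_r := gibbs beta HR in
  let rho_i : 'M[R[i]]_(s * m * r) := rhoSM *t rhoR_i in
  let W : 'M[R[i]]_(s * m * r) := @UxId R s m r U in
  let rho_f : 'M[R[i]]_(s * m * r) := W *m rho_i *m adj W in
  (* reduced states, initial *)
  let rhoSM_i : 'M[R[i]]_(s * m) := ptrace2 rho_i in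
  let rhoS_i : 'M[R[i]]_s := ptrace2 rhoSM_i in
  (* reduced states, final *)
  let rhoSM_f : 'M[R[i]]_(s * m) := ptrace2 rho_f in
  let rhoS_f : 'M[R[i]]_s := ptrace2 rhoSM_f in
  let rhoR_f : 'M[R[i]]_r := ptrace1 rho_f in
  let rhoSR_f : 'M[R[i]]_(s * r) := ptrace2 (to_SRM rho_f) in
  let QR : R := complex.Re (\tr ((rhoR_f - rhoR_i) *m HR)) in
  let Sigma_S : R := vN_entropy rhoS_f - vN_entropy rhoS_i + beta * QR in
  let Sigma_SgM : R :=
    cond_entropy rhoSM_f - cond_entropy rhoSM_i + beta * QR in
  let Sigma_I : R := Sigma_SgM - Sigma_S in
  Sigma_I = vN_entropy rhoSR_f + vN_entropy rhoSM_f
            - vN_entropy rhoS_f - vN_entropy rho_f.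
Proof.
move=> rhoSM_dens _ r_gt0 _ U_unitary rhoR_i rho_i W rho_f rhoSM_i rhoS_i
  rhoSM_f rhoS_f rhoR_f rhoSR_f QR Sigma_S Sigma_SgM Sigma_I.
have rhoR_dens : density rhoR_i := gibbs_density beta HR r_gt0.
have rhoS_dens : density (ptrace2 rhoSM) := ptrace2_density rhoSM_dens.
have rhoSM_iE : rhoSM_i = rhoSM.
  by case: rhoR_dens => _ [_ trR]; rewrite /rhoSM_i ptrace2_tens trR scale1r.
have rho_f_SRM : to_SRM rho_f = (U *t 1%:M) *m to_SRM rho_i *m (U^t* *t 1%:M).
  by rewrite /rho_f adjE !to_SRM_mul to_SRM_trmxC to_SRM_UxId trmxC_tens trmxC1.
have rhoM_fE : ptrace1 rhoSM_f = ptrace1 rhoSM_i.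
  rewrite /rhoSM_f /rhoSM_i !ptrace1_ptrace2 rho_f_SRM ptrace1_conj_tensmx1 //.
  exact: trmxC_unitary_mulmx U_unitary.
have S_rho_f : vN_entropy rho_f = vN_entropy rhoSM + vN_entropy rhoR_i.
  have rho_i_normal := density_normalmx (density_tens rhoSM_dens rhoR_dens).
  have W_unitary : W \is unitarymx by apply: UxId_unitary.
  rewrite /rho_f adjE (vN_entropy_unitary_conj rho_i_normal W_unitary).
  exact: vN_entropy_tens.
have S_rhoSR_f :
    vN_entropy rhoSR_f = vN_entropy (ptrace2 rhoSM) + vN_entropy rhoR_i.
  have rhoSR_i_normal := density_normalmx (density_tens rhoS_dens rhoR_dens).
  rewrite /rhoSR_f rho_f_SRM ptrace2_conj_tensmx1 ptrace2_to_SRM_tens.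
  rewrite (vN_entropy_unitary_conj rhoSR_i_normal U_unitary).
  exact: vN_entropy_tens.
rewrite /Sigma_I /Sigma_SgM /Sigma_S /cond_entropy rhoM_fE S_rho_f S_rhoSR_f.
rewrite /rhoS_i rhoSM_iE; ring.
Qed.
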